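(* Let $\alpha>0$ and $\beta\in\mathbb{R}$, and define $u:[0,1]\to\mathbb{R}$ by $u(x)=\beta-\alpha|x-\frac13|$ for $x<1/2$ and $u(x)=u(1-x)$ for $x\ge 1/2$ (equivalently $u(x)=f(x)$ for $x<1/2$, $u(x)=f(1-x)$ for $x\ge1/2$, where $f(x)=\alpha(x-\frac13)+\beta$ for $x<1/3$ and $f(x)=\alpha(\frac13-x)+\beta$ for $1/3\le x\le 1/2$). Let $A=u$ and $T(x)=2x\pmod 1$. Then for every $x\in[0,1]$, $$\max_{T(y)=x}[A(y)+u(y)]=\max\{2u(x/2),\,2u((x+1)/2)\}=u(x)+\beta,$$ so $u$ is a calibrated subaction for the potential $A=u$, with $m(A)=\beta$.
   Context: A calibrated subaction for $A$ is a continuous $V$ with $V(x)=\max_{T(y)=x}[A(y)+V(y)-m(A)]$, where $m(A)$ is the supremum of $\int A\,d\rho$ over $T$-invariant probabilities $\rho$. *)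

From HB Require Import structures.
From mathcomp Require Import all_boot all_order all_algebra.
From mathcomp Require Import all_classical all_reals all_analysis.
Set Implicit Arguments. Unset Strict Implicit. Unset Printing Implicit Defensive.
Import Order.TTheory GRing.Theory Num.Theory.
Import numFieldNormedType.Exports.
Local Open Scope classical_set_scope.
Local Open Scope ring_scope.

Section Defs.
Variable R : realType.

Definition frac (x : R) : R := x - (Num.floor x)%:~R.

Definition Tdbl (y : R) : R := frac (2 * y).

(* preimages of x in [0,1] under T; [0,1] is read as the circle R/Z, so the
   point x = 1 is identified with 0 (T(y) = x means 2y = x mod 1). *)
Definition Tpre (x : R) : set R := [set y | y \in `[0, 1] /\ Tdbl y = frac x].

Definition is_max_over (S : set R) (g : R -> R) (v : R) : Prop :=
  (exists2 y, S y & g y = v) /\ (forall y, S y -> g y <= v).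

(* T-invariant Borel probability measures on [0,1] (as measures on R
   giving full mass to [0,1]) *)
Definition invariant_prob (P : probability R R) : Prop :=
  P `[0, 1]%classic = 1%E /\
  forall B : set R, measurable B -> P (Tdbl @^-1` B) = P B.

Definition mA (A : R -> R) : \bar R :=
  ereal_sup [set (\int[P]_(x in `[0%R, 1%R]%classic) (A x)%:E)%E
            | P in [set P : probability R R | invariant_prob P]].

Definition calibrated_subaction (A V : R -> R) : Prop :=
  {within `[0, 1]%classic, continuous V} /\
  exists c : R, mA A = c%:E /\
    forall x, x \in `[0, 1] ->
      is_max_over (Tpre x) (fun y => A y + V y - c) (V x).

Definition u_ab (alpha beta : R) (x : R) : R :=
  if x < 1 / 2 then beta - alpha * `|x - 1 / 3|
  else beta - alpha * `|(1 - x) - 1 / 3|.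

End Defs.

From Pilot Require Import Defs.
From HB Require Import structures.
From mathcomp Require Import all_boot all_order all_algebra.
From mathcomp Require Import all_classical all_reals all_analysis.
From mathcomp Require Import measurable_realfun lra zify.
Set Implicit Arguments. Unset Strict Implicit. Unset Printing Implicit Defensive.
Import Order.TTheory GRing.Theory Num.Theory.
Import numFieldNormedType.Exports.
Local Open Scope classical_set_scope.
Local Open Scope ring_scope.

(* Write u = beta - alpha * d, where d is the distance to the period-two orbit
   {1/3, 2/3} of the doubling map.  The inverse branches y = x/2 and
   y = (x+1)/2 halve distances and swap the two points of the orbit, so that
   d (x/2) = |x - 2/3| / 2 and d ((x+1)/2) = |x - 1/3| / 2; the better branch
   therefore gives 2 u = 2 beta - alpha d x = u x + beta.  Since u <= beta with
   equality on the orbit, every invariant probability integrates u to at most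
   beta, and the equidistribution on the orbit attains beta. *)

Section doubling_map.
Variable R : realType.
Implicit Types x y : R.

Lemma frac_id x : 0 <= x < 1 -> Defs.frac x = x.
Proof. by move=> x01; rewrite /Defs.frac (@floor_def _ _ 0) ?subr0 // add0r. Qed.

Lemma frac_addr1 x : Defs.frac (x + 1) = Defs.frac x.
Proof.
by rewrite /Defs.frac floorDrz ?rpred1 // floor1 intrD opprD addrACA subrr addr0.
Qed.

Lemma Tdbl_half x : Tdbl (x / 2) = Defs.frac x.
Proof. by rewrite /Tdbl mulrC divfK ?pnatr_eq0. Qed.

Lemma Tdbl_half_add1 x : Tdbl ((x + 1) / 2) = Defs.frac x.
Proof. by rewrite Tdbl_half frac_addr1. Qed.

Lemma Tdbl_third : Tdbl (1 / 3 : R) = 2 / 3.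
Proof. by rewrite /Tdbl frac_id; [lra | apply/andP; split; lra]. Qed.

Lemma Tdbl_two_thirds : Tdbl (2 / 3 : R) = 1 / 3.
Proof.
rewrite /Tdbl (_ : 2 * (2 / 3) = 1 / 3 + 1); last by lra.
by rewrite frac_addr1 frac_id //; apply/andP; split; lra.
Qed.

Lemma Tpre_half x : x \in `[0, 1] -> Tpre x (x / 2).
Proof.
rewrite in_itv /= => /andP[x0 x1]; split; last exact: Tdbl_half.
by rewrite in_itv /=; apply/andP; split; lra.
Qed.

Lemma Tpre_half_add1 x : x \in `[0, 1] -> Tpre x ((x + 1) / 2).
Proof.
rewrite in_itv /= => /andP[x0 x1]; split; last exact: Tdbl_half_add1.
by rewrite in_itv /=; apply/andP; split; lra.
Qed.

Lemma Tpre_cases x y : x \in `[0, 1] -> Tpre x y ->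
  [\/ y = x / 2, y = (x + 1) / 2, x = 1 /\ y = 0 | x = 0 /\ y = 1].
Proof.
rewrite !in_itv /= => /andP[x0 x1] [/[!in_itv] /= /andP[y0 y1]].
rewrite /Tdbl /Defs.frac => Tyx.
set k := Num.floor (2 * y) - Num.floor x.
have yxk : 2 * y - x = k%:~R by rewrite intrB; lra.
have k_gt : -2 < k by rewrite -(ltr_int R) -yxk; lra.
have k_lt : k < 3 by rewrite -(ltr_int R) -yxk; lra.
have : k = -1 \/ k = 0 \/ k = 1 \/ k = 2 by lia.
case=> [|[|[|]]] kE; rewrite kE ?intrN /= in yxk.
- by apply: Or43; split; lra.
- by apply: Or41; lra.
- by apply: Or42; lra.
- by apply: Or44; split; lra.
Qed.
End doubling_map.

Section mean_dirac.
Variables (R : realType) (a b : R).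

Definition mean_dirac : set R -> \bar R :=
  mscale ((2^-1)%:nng : {nonneg R}) (measure_add \d_a \d_b).

HB.instance Definition _ := Measure.on mean_dirac.

Lemma mean_diracE (A : set R) :
  mean_dirac A = ((2^-1)%:E * (\d_a A + \d_b A))%E.
Proof. by rewrite /mean_dirac /mscale /= /msum big_ord_recl big_ord1. Qed.

Lemma mean_dirac_eq1 (A : set R) : A a -> A b -> mean_dirac A = 1%E.
Proof.
move=> Aa Ab; rewrite mean_diracE !diracE !mem_set // -EFinD -EFinM /=.
by congr (_%:E); lra.
Qed.

Lemma mean_dirac_setT : mean_dirac [set: R] = 1%E.
Proof. exact: mean_dirac_eq1. Qed.

HB.instance Definition _ :=
  @Measure_isProbability.Build _ _ R mean_dirac mean_dirac_setT.

Lemma mean_dirac_invariant : a \in `[0, 1] -> b \in `[0, 1] ->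
  Tdbl a = b -> Tdbl b = a -> invariant_prob mean_dirac.
Proof.
move=> a01 b01 Tab Tba; split; first exact: mean_dirac_eq1.
move=> B _ /=; rewrite !mean_diracE.
have dirac_preimage (c : R) : \d_c (@Tdbl R @^-1` B) = \d_(Tdbl c) B :> \bar R.
  by rewrite !diracE.
by rewrite !dirac_preimage Tab Tba addeC.
Qed.

Lemma integral_mean_dirac_cst (D : set R) (f : R -> R) (c : R) :
  measurable D -> D a -> D b -> measurable_fun D f -> f a = c -> f b = c ->
  (\int[mean_dirac]_(x in D) (f x)%:E = c%:E)%E.
Proof.
move=> mD Da Db mf fa fb.
rewrite (ae_eq_integral (cst c%:E)) //.
- by rewrite integral_cst //= mean_dirac_eq1 // mule1.
- exact/measurable_EFinP.
- exists (~` [set a; b]); split.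
  + by apply: measurableC; apply: measurableU; exact: measurable_set1.
  + rewrite /= mean_diracE !diracE.
    have -> : (a \in ~` [set a; b]) = false.
      by apply/negbTE/negP => /set_mem; apply; left.
    have -> : (b \in ~` [set a; b]) = false.
      by apply/negbTE/negP => /set_mem; apply; right.
    by rewrite adde0 mule0.
  + by move=> x /= fxc [|] xab; apply: fxc; rewrite xab ?fa ?fb.
Qed.

End mean_dirac.

Section continuous_integrable.
Variables (R : realType) (mu : {finite_measure set R -> \bar R}).

Lemma continuous_compact_integrable_finite (A : set R) (f : R -> R) :
  compact A -> {within A, continuous f} -> mu.-integrable A (EFin \o f).
Proof.
move=> cptA ctsfA; have mA := compact_measurable cptA.
apply: measurable_bounded_integrable => //.
- by rewrite ltey_eq fin_num_measure.
- exact: subspace_continuous_measurable_fun.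
- have /compact_bounded[M [_ mrt]] := continuous_compact ctsfA cptA.
  by exists M; split; rewrite ?num_real // => ? ? ? ?; exact: mrt.
Qed.

End continuous_integrable.

Lemma integral_le_cst (R : realType) (P : probability R R) (A : set R)
    (f : R -> R) (c : R) :
  compact A -> P A = 1%E -> {within A, continuous f} -> {in A, forall x, f x <= c} ->
  (\int[P]_(x in A) (f x)%:E <= c%:E)%E.
Proof.
move=> cptA PA cf fc; have mA := compact_measurable cptA.
rewrite -[c%:E]mule1 -PA -integral_cst //.
apply: le_integral => //.
- exact: continuous_compact_integrable_finite.
- by apply: continuous_compact_integrable_finite => //; exact: cst_continuous.
Qed.

Lemma is_max_over_subr (R : realType) (S : set R) (g : R -> R) (v c : R) :
  is_max_over S g v -> is_max_over S (fun y => g y - c) (v - c).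
Proof. by case=> [[y Sy <-] gv]; split=> [|z /gv]; [exists y | rewrite lerD2r]. Qed.

Ltac lra_cases :=
  repeat match goal with
  | |- context [if ?a < ?b then _ else _] =>
      let h := fresh "h" in
      case: ifP => h; [| move/negbT: h; rewrite -leNgt => h]; try (exfalso; lra)
  | |- context [`|?t|] =>
      let h := fresh "h" in
      have [h|h] := lerP 0 t; [rewrite (ger0_norm h) | rewrite (ltr0_norm h)];
      try (exfalso; lra)
  | |- context [Num.min ?a ?b] => rewrite /Order.min
  end; lra.

Section u_ab.
Variables (R : realType) (alpha beta : R).
Local Notation u := (u_ab alpha beta).
Implicit Types x y : R.

Definition orbit_dist x := Num.min `|x - 1 / 3| `|x - 2 / 3|.

Lemma u_abE x : u x = beta - alpha * orbit_dist x.
Proof. by rewrite /u_ab /orbit_dist; case: ifP => ?; congr (_ - _ * _); lra_cases. Qed.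

Lemma u_ab0_1 : u 1 = u 0.
Proof. by rewrite !u_abE /orbit_dist; congr (_ - _ * _); lra_cases. Qed.

Lemma u_ab_third : u (1 / 3) = beta.
Proof. by rewrite u_abE /orbit_dist; lra_cases. Qed.

Lemma u_ab_two_thirds : u (2 / 3) = beta.
Proof. by rewrite u_abE /orbit_dist; lra_cases. Qed.

Lemma orbit_dist_half x : x \in `[0, 1] -> orbit_dist (x / 2) = `|x - 2 / 3| / 2.
Proof. by rewrite in_itv /= => /andP[x0 x1]; rewrite /orbit_dist; lra_cases. Qed.

Lemma orbit_dist_half_add1 x : x \in `[0, 1] ->
  orbit_dist ((x + 1) / 2) = `|x - 1 / 3| / 2.
Proof. by rewrite in_itv /= => /andP[x0 x1]; rewrite /orbit_dist; lra_cases. Qed.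

Lemma min_orbit_dist_branches x : x \in `[0, 1] ->
  Num.min (orbit_dist (x / 2)) (orbit_dist ((x + 1) / 2)) = orbit_dist x / 2.
Proof.
by move=> x01; rewrite orbit_dist_half // orbit_dist_half_add1 // /orbit_dist; lra_cases.
Qed.

Lemma continuous_u_ab : continuous u.
Proof.
rewrite (_ : u = fun x => beta - alpha * orbit_dist x); last exact/funext/u_abE.
move=> x; apply: cvgB; first exact: cvg_cst.
apply: cvgM; first exact: cvg_cst.
apply: (@continuous_min _ _ (fun y => `|y - 1 / 3|) (fun y => `|y - 2 / 3|));
  by apply: cvg_norm; apply: cvgB => //; exact: cvg_cst.
Qed.

Lemma u_ab_Tpre x y : x \in `[0, 1] -> Tpre x y ->
  u y = u (x / 2) \/ u y = u ((x + 1) / 2).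
Proof.
move=> x01 /(Tpre_cases x01) [->|->|[-> ->]|[-> ->]]; [left | right | right | left] => //.
- by rewrite (_ : (1 + 1) / 2 = 1) ?u_ab0_1 //; lra.
- by rewrite mul0r u_ab0_1.
Qed.

Lemma is_max_over_u_ab x : x \in `[0, 1] ->
  is_max_over (Tpre x) (fun y => u y + u y)
    (Num.max (2 * u (x / 2)) (2 * u ((x + 1) / 2))).
Proof.
move=> x01; split.
- have [_|_] := leP (2 * u (x / 2)) (2 * u ((x + 1) / 2)).
  + by exists ((x + 1) / 2); [exact: Tpre_half_add1 | lra].
  + by exists (x / 2); [exact: Tpre_half | lra].
- move=> y /(u_ab_Tpre x01) [->|->]; rewrite le_max; apply/orP; [left | right]; lra.
Qed.

Hypothesis alpha_ge0 : 0 <= alpha.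

Lemma u_ab_le x : u x <= beta.
Proof.
rewrite u_abE gerBl; apply: mulr_ge0 => //.
by rewrite /orbit_dist le_min !normr_ge0.
Qed.

Lemma max_u_ab_branches x : x \in `[0, 1] ->
  Num.max (2 * u (x / 2)) (2 * u ((x + 1) / 2)) = u x + beta.
Proof.
move=> x01; rewrite !u_abE.
have -> : orbit_dist x = 2 * Num.min (orbit_dist (x / 2)) (orbit_dist ((x + 1) / 2)).
  by rewrite min_orbit_dist_branches //; lra.
set p := orbit_dist (x / 2); set q := orbit_dist ((x + 1) / 2).
have [pq|/ltW qp] := leP p q.
- by rewrite max_l; have := ler_wpM2l alpha_ge0 pq; lra.
- by rewrite max_r; have := ler_wpM2l alpha_ge0 qp; lra.
Qed.

Lemma mA_u_ab : mA u = beta%:E.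
Proof.
apply/eqP; rewrite eq_le; apply/andP; split.
- apply: ge_ereal_sup => _ [P [P01 _] <-].
  apply: integral_le_cst => //; first exact: segment_compact.
  + exact: continuous_subspaceT continuous_u_ab.
  + by move=> x _; exact: u_ab_le.
- have third01 : 1 / 3 \in `[0, 1 : R] by rewrite in_itv /=; apply/andP; split; lra.
  have two_thirds01 : 2 / 3 \in `[0, 1 : R] by rewrite in_itv /=; apply/andP; split; lra.
  have mu : measurable_fun (`[0, 1] : set R) u.
    exact: measurable_funTS (continuous_measurable_fun continuous_u_ab).
  rewrite -(integral_mean_dirac_cst (measurable_itv `[0, 1]) third01 two_thirds01 mu
    u_ab_third u_ab_two_thirds).
  apply: ereal_sup_ubound; exists (mean_dirac (1 / 3) (2 / 3)) => //.
  exact: mean_dirac_invariant third01 two_thirds01 (Tdbl_third _) (Tdbl_two_thirds _).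
Qed.

Lemma calibrated_subaction_u_ab : calibrated_subaction u u.
Proof.
split; first exact: continuous_subspaceT continuous_u_ab.
exists beta; split; first exact: mA_u_ab.
move=> x x01; rewrite -(addrK beta (u x)) -max_u_ab_branches //.
exact/is_max_over_subr/is_max_over_u_ab.
Qed.

End u_ab.

Theorem mainTheorem5 (R : realType) (alpha beta : R) (halpha : 0 < alpha) :
  let u := u_ab alpha beta in
  let A := u in
  (forall x : R, x \in `[0, 1] ->
     is_max_over (Tpre x) (fun y => A y + u y)
       (Num.max (2 * u (x / 2)) (2 * u ((x + 1) / 2))) /\
     Num.max (2 * u (x / 2)) (2 * u ((x + 1) / 2)) = u x + beta) /\
  mA A = beta%:E /\
  calibrated_subaction A u.
Proof.
move=> u A; have alpha_ge0 := ltW halpha.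
split; last split.
- by move=> x x01; split; [exact: is_max_over_u_ab | exact: max_u_ab_branches].
- exact: mA_u_ab.
- exact: calibrated_subaction_u_ab.
Qed.
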